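(* Consider the coupled SIS epidemic and evolutionary behavioral dynamics $$\dot y = \big[(1-y)(z_S+\alpha(1-z_S))(\beta_u z_I+\beta_p(1-z_I))-\gamma\big]y,$$ $$\dot z_S = z_S(1-z_S)\big[c_P - L(1-\alpha)(\beta_u z_I+\beta_p(1-z_I))\,y\big],$$ $$\dot z_I = z_I(1-z_I)(c_{\mathtt{IP}}-c_{\mathtt{IU}}),$$ on $[0,1]^3$. Define $$y^*_u := 1-\frac{\gamma}{\beta_p},\quad y^*_{\mathrm{int}} := \frac{c_P}{L(1-\alpha)\beta_p},\quad y^*_p := 1-\frac{\gamma}{\alpha\beta_p},\quad z^*_{S,\mathrm{int}} := \frac{1}{1-\alpha}\left[\frac{\gamma}{\beta_p(1-y^*_{\mathrm{int}})}-\alpha\right],$$ and the candidate equilibria (with $z_I=0$) $\mathbf{E0}=(0,0,0)$, $\mathbf{E1}=(0,1,0)$, $\mathbf{E2}=(y^*_u,1,0)$, $\mathbf{E3}=(y^*_{\mathrm{int}},z^*_{S,\mathrm{int}},0)$, $\mathbf{E4}=(y^*_p,0,0)$. Then: (1) $\mathbf{E0}$ is an equilibrium for all parameter values and is unstable; (2) $\mathbf{E1}$ is an equilibrium for all parameter values; it is stable if $\beta_p<\gamma$ and unstable if $\beta_p>\gamma$; (3) $\mathbf{E2}$ is an equilibrium in $[0,1]^3$ (with $y>0$) only when $\beta_p>\gamma$; it is stable when $y^*_u<y^*_{\mathrm{int}}$ and unstable when $y^*_u>y^*_{\mathrm{int}}$; (4) $\mathbf{E3}$ is an equilibrium with $y^*_{\mathrm{int}}\in(0,1)$,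 $z^*_{S,\mathrm{int}}\in(0,1)$ only when $y^*_p<y^*_{\mathrm{int}}<y^*_u$, and then it is stable; (5) $\mathbf{E4}$ is an equilibrium with $y^*_p\in(0,1)$ only when $\gamma<\alpha\beta_p$; it is stable when $y^*_p>y^*_{\mathrm{int}}$ and unstable when $y^*_p<y^*_{\mathrm{int}}$.
   Context: Parameters: $\alpha\in(0,1)$, $\beta_u>\beta_p>0$, $\gamma>0$, $c_P>0$, $L>0$, $c_{\mathtt{IU}}>c_{\mathtt{IP}}\ge 0$. Here $y$ is the infected fraction, $z_S$ the unprotected fraction among susceptibles, $z_I$ the unprotected fraction among infected. ''Stable'' means locally exponentially stable (all eigenvalues of the Jacobian of the vector field at the equilibrium have negative real part); ''unstable'' means the Jacobian has an eigenvalue with positive real part. *)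

From mathcomp Require Import all_boot all_algebra.
From mathcomp Require Import all_classical all_reals all_analysis.
From mathcomp Require Import complex.
Set Implicit Arguments. Unset Strict Implicit. Unset Printing Implicit Defensive.
Import GRing.Theory Num.Theory.
Local Open Scope ring_scope.

(* A point (y, z_S, z_I) of R^3, as a row vector: coordinate 0 = y,
   1 = z_S, 2 = z_I. *)
Definition pt3 {R : realType} (a b c : R) : 'rV[R]_3 :=
  \row_(i < 3) (if (i : nat) == 0%N then a else if (i : nat) == 1%N then b else c).

Definition sis_field {R : realType} (alpha bu bp gamma cP L cIU cIP : R)
    (x : 'rV[R]_3) : 'rV[R]_3 :=
  let y := x 0 0 in let zS := x 0 1 in let zI := x 0 2 in
  let beta := bu * zI + bp * (1 - zI) in
  pt3 (((1 - y) * (zS + alpha * (1 - zS)) * beta - gamma) * y)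
      (zS * (1 - zS) * (cP - L * (1 - alpha) * beta * y))
      (zI * (1 - zI) * (cIP - cIU)).

Definition is_equilibrium {R : realType} (F : 'rV[R]_3 -> 'rV[R]_3)
    (x : 'rV[R]_3) : Prop := F x = 0.

Definition jacobian {R : realType} {n : nat} (F : 'rV[R]_n -> 'rV[R]_n)
    (x : 'rV[R]_n) : 'M[R]_n :=
  \matrix_(i < n, j < n) ('D_(delta_mx 0 j) (fun u => F u 0 i) x).

Definition eigenvalueC {R : realType} {n : nat} (A : 'M[R]_n) (z : R[i]) : bool :=
  root (map_poly (real_complex R) (char_poly A)) z.

Definition stable_at {R : realType} {n : nat} (F : 'rV[R]_n -> 'rV[R]_n)
    (x : 'rV[R]_n) : Prop :=
  forall z : R[i], eigenvalueC (jacobian F x) z -> complex.Re z < 0.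

Definition unstable_at {R : realType} {n : nat} (F : 'rV[R]_n -> 'rV[R]_n)
    (x : 'rV[R]_n) : Prop :=
  exists z : R[i], eigenvalueC (jacobian F x) z /\ 0 < complex.Re z.

From Pilot Require Import Defs.
From mathcomp Require Import all_boot all_algebra.
From mathcomp Require Import all_classical all_reals all_analysis.
From mathcomp Require Import complex.
From mathcomp Require Import ring lra.
Import order.Order.TTheory GRing.Theory Num.Theory.
Set Implicit Arguments. Unset Strict Implicit. Unset Printing Implicit Defensive.
Local Open Scope ring_scope.
Local Open Scope complex_scope.

(* The z_I-equation involves neither y nor z_S, so the Jacobian is block upper
   triangular, with the eigenvalue (1 - 2 z_I)(c_IP - c_IU) = c_IP - c_IU < 0 at
   z_I = 0; stability is then decided by the trace and the determinant of the
   (y, z_S)-block, whose eigenvalues solve a real quadratic.  At E0, E1, E2, E4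
   z_S is 0 or 1, so this block is triangular too and its diagonal entries are
   the eigenvalues: the y-entry is +-(bp - gamma) or +-(alpha bp - gamma), and
   the z_S-entry is +-(c_P - L (1 - alpha) bp y), which compares y with y_int.
   At E3 the z_S-diagonal entry vanishes and the off-diagonal entries have
   opposite signs, so the trace is negative and the determinant positive. *)

Lemma Re_lt0_root_2x2 (R : rcfType) (a d c : R) (z : R[i]) :
  a + d < 0 -> 0 < a * d - c -> (z - a%:C) * (z - d%:C) = c%:C -> complex.Re z < 0.
Proof.
case: z => x y tr_lt0 det_gt0 /eqP; rewrite eq_complex /= => /andP[/eqP re /eqP im] /=.
have : y * (2 * x - (a + d)) = 0 by rewrite -im; ring.
move/eqP; rewrite mulf_eq0 => /orP[/eqP y0 | /eqP]; last by lra.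
by move: re; rewrite y0; nra.
Qed.

Section BlockTriangular3.
Variable R : realType.
Variable g : nat -> nat -> R.
Hypotheses (g20 : g 2 0 = 0) (g21 : g 2 1 = 0).
Local Notation A := (\matrix_(i < 3, j < 3) g i j).

Lemma char_poly_block_triangular3 :
  char_poly A = ('X - (g 2 2)%:P) *
    (('X - (g 0 0)%:P) * ('X - (g 1 1)%:P) - (g 0 1)%:P * (g 1 0)%:P).
Proof.
rewrite /char_poly (expand_det_row _ ord_max) !big_ord_recr big_ord0 /= add0r.
rewrite /cofactor !(expand_det_row _ ord_max) !big_ord_recr !big_ord0 /=.
rewrite /cofactor !mxE /= !det_mx11 !mxE /bump /= g20 g21.
rewrite !(addn0, add0n, addn1) /= (_ : (2 + 2 = 4)%N) //.
ring.
Qed.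

Lemma eigenvalueC_block_triangular3 (z : R[i]) :
  eigenvalueC A z <->
  z = (g 2 2)%:C \/ (z - (g 0 0)%:C) * (z - (g 1 1)%:C) = (g 0 1)%:C * (g 1 0)%:C.
Proof.
rewrite /eigenvalueC char_poly_block_triangular3 rmorphM rootM /=.
rewrite !(rmorphB, rmorphM) /= !map_polyX !map_polyC /= root_XsubC.
rewrite /root !hornerE subr_eq0.
by split=> [/orP[] /eqP | [] ->]; [left | right | rewrite eqxx | rewrite eqxx orbT].
Qed.

Lemma stable_block_triangular3 :
  g 2 2 < 0 -> g 0 0 + g 1 1 < 0 -> 0 < g 0 0 * g 1 1 - g 0 1 * g 1 0 ->
  forall z, eigenvalueC A z -> complex.Re z < 0.
Proof.
move=> g22_lt0 tr_lt0 det_gt0 z /eigenvalueC_block_triangular3[-> // | ].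
by rewrite -rmorphM; apply: Re_lt0_root_2x2.
Qed.

Hypothesis g10 : g 1 0 = 0.

Lemma stable_triangular3 :
  g 0 0 < 0 -> g 1 1 < 0 -> g 2 2 < 0 -> forall z, eigenvalueC A z -> complex.Re z < 0.
Proof.
move=> g00_lt0 g11_lt0 g22_lt0; apply: stable_block_triangular3 => //; first lra.
by rewrite g10 mulr0 subr0 nmulr_rgt0.
Qed.

Lemma eigenvalueC_triangular3 k : (k < 3)%N -> eigenvalueC A (g k k)%:C.
Proof.
move=> lt_k3; apply/eigenvalueC_block_triangular3; rewrite g10 mulr0.
by case: k lt_k3 => [|[|[|//]]] _; [right; ring | right; ring | left].
Qed.

Lemma unstable_triangular3 k :
  (k < 3)%N -> 0 < g k k -> exists z, eigenvalueC A z /\ 0 < complex.Re z.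
Proof. by move=> lt_k3 gkk_gt0; exists (g k k)%:C; rewrite eigenvalueC_triangular3. Qed.

End BlockTriangular3.

Lemma is_derive_coord (R : realType) m n (x v : 'M[R]_(m, n)) i j :
  is_derive x v (fun M : 'M[R]_(m, n) => M i j) (v i j).
Proof.
have coord_derivable : derivable (fun M : 'M[R]_(m, n) => M i j) x v.
  exact/diff_derivable/differentiable_coord.
apply: DeriveDef => //.
have id_derivable : derivable (@id 'M[R]_(m, n)) x v by [].
have := congr1 (fun M : 'M[R]_(m, n) => M i j) (derive_mx id_derivable).
by rewrite mxE derive_id.
Qed.

Lemma pt3_eq0 (R : realType) (a b c : R) : a = 0 -> b = 0 -> c = 0 -> pt3 a b c = 0.
Proof. by move=> -> -> ->; apply/rowP => j; rewrite !mxE; case: ifP => _ //; case: ifP. Qed.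

Section SISJacobian.
Variable R : realType.
Variables alpha bu bp gamma cP L cIU cIP : R.
Local Notation F := (sis_field alpha bu bp gamma cP L cIU cIP).

Definition sis_jac (x : 'rV[R]_3) (i j : nat) : R :=
  let y := x 0 0 in let zS := x 0 1 in let zI := x 0 2 in
  let beta := bu * zI + bp * (1 - zI) in
  let a := zS + alpha * (1 - zS) in
  match i, j with
  | 0%N, 0%N => (1 - y) * a * beta - gamma - a * beta * y
  | 0%N, 1%N => (1 - y) * (1 - alpha) * beta * y
  | 0%N, _ => (1 - y) * a * (bu - bp) * y
  | 1%N, 0%N => - (zS * (1 - zS) * L * (1 - alpha) * beta)
  | 1%N, 1%N => (1 - 2 * zS) * (cP - L * (1 - alpha) * beta * y)
  | 1%N, _ => - (zS * (1 - zS) * L * (1 - alpha) * (bu - bp) * y)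
  | _, 0%N | _, 1%N => 0
  | _, _ => (1 - 2 * zI) * (cIP - cIU)
  end.

Lemma is_derive_sis_field x v (i : 'I_3) :
  is_derive x v (fun u => F u 0 i)
    (sis_jac x i 0 * v 0 0 + sis_jac x i 1 * v 0 1 + sis_jac x i 2 * v 0 2).
Proof.
rewrite /sis_field /pt3; under boolp.eq_fun => u do rewrite mxE.
case: i => -[|[|[|//]]] ? /=; apply: is_derive_eq.
all: try by repeat first [exact: is_derive_coord | exact: is_derive_cst |
                          apply: is_deriveM | apply: is_deriveB | apply: is_deriveD].
all: by rewrite /sis_jac /GRing.scale /=; ring.
Qed.

Lemma jacobian_sis_field x : Defs.jacobian F x = \matrix_(i < 3, j < 3) sis_jac x i j.
Proof.
apply/matrixP => i j; rewrite [LHS]mxE [RHS]mxE.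
rewrite (derive_val (is_derive := is_derive_sis_field x (delta_mx 0 j) i)) !mxE.
by case: j => -[|[|[|//]]] ? /=; rewrite !(mulr0, mulr1, addr0, add0r).
Qed.

Lemma sis_field_pt3 y zS zI : F (pt3 y zS zI) =
  pt3 (((1 - y) * (zS + alpha * (1 - zS)) * (bu * zI + bp * (1 - zI)) - gamma) * y)
      (zS * (1 - zS) * (cP - L * (1 - alpha) * (bu * zI + bp * (1 - zI)) * y))
      (zI * (1 - zI) * (cIP - cIU)).
Proof. by apply/rowP => j; rewrite /sis_field /pt3 !mxE. Qed.

End SISJacobian.

Section SISEquilibria.
Variable R : realType.
Variables alpha bu bp gamma cP L cIU cIP : R.
Local Notation F := (sis_field alpha bu bp gamma cP L cIU cIP).

Definition y_u := 1 - gamma / bp.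
Definition y_int := cP / (L * (1 - alpha) * bp).
Definition y_p := 1 - gamma / (alpha * bp).
Definition zS_int := (1 - alpha)^-1 * (gamma / (bp * (1 - y_int)) - alpha).

Lemma y_u_bp : bp != 0 -> (1 - y_u) * bp = gamma.
Proof. by move=> bp_neq0; rewrite /y_u opprB addrC subrK mulfVK. Qed.

Lemma y_p_alpha_bp : alpha * bp != 0 -> (1 - y_p) * (alpha * bp) = gamma.
Proof. by move=> abp_neq0; rewrite /y_p opprB addrC subrK mulfVK. Qed.

Lemma y_u_lt1 : 0 < bp -> 0 < gamma -> y_u < 1.
Proof. by move=> bp_gt0 gamma_gt0; rewrite /y_u gtrBl divr_gt0. Qed.

Lemma y_u_mem01 : 0 < bp -> 0 < gamma -> (0 < y_u /\ y_u <= 1) <-> gamma < bp.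
Proof.
move=> bp_gt0 gamma_gt0; have := y_u_bp (lt0r_neq0 bp_gt0).
by split=> [[]|]; nra.
Qed.

Lemma y_p_mem01 : 0 < alpha -> 0 < bp -> 0 < gamma ->
  (0 < y_p /\ y_p < 1) <-> gamma < alpha * bp.
Proof.
move=> alpha_gt0 bp_gt0 gamma_gt0; have abp_gt0 : 0 < alpha * bp by exact: mulr_gt0.
by have := y_p_alpha_bp (lt0r_neq0 abp_gt0); split=> [[]|]; nra.
Qed.

Section ProtectionThreshold.
Hypotheses (alpha_lt1 : alpha < 1) (bp_gt0 : 0 < bp) (L_gt0 : 0 < L).

Let K_gt0 : 0 < L * (1 - alpha) * bp.
Proof. by rewrite !mulr_gt0 ?subr_gt0. Qed.

Lemma y_int_cP : L * (1 - alpha) * bp * y_int = cP.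
Proof. by rewrite /y_int mulrC mulfVK // lt0r_neq0. Qed.

Lemma y_int_gt0 : 0 < cP -> 0 < y_int.
Proof. by move=> cP_gt0; rewrite /y_int divr_gt0. Qed.

Lemma lt_y_int y : (y < y_int) = (L * (1 - alpha) * bp * y < cP).
Proof. by rewrite /y_int ltr_pdivlMr // mulrC. Qed.

Lemma gt_y_int y : (y_int < y) = (cP < L * (1 - alpha) * bp * y).
Proof. by rewrite /y_int ltr_pdivrMr // mulrC. Qed.

End ProtectionThreshold.

Lemma zS_int_balance : alpha < 1 -> 0 < bp -> y_int < 1 ->
  (1 - y_int) * (zS_int + alpha * (1 - zS_int)) * bp = gamma.
Proof.
move=> alpha_lt1 bp_gt0 y_int_lt1; rewrite /zS_int; field.
by rewrite !lt0r_neq0 ?subr_gt0.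
Qed.

Lemma zS_int_gt0 : 0 < alpha -> alpha < 1 -> 0 < bp -> y_int < 1 ->
  (0 < zS_int) = (y_p < y_int).
Proof.
move=> alpha_gt0 alpha_lt1 bp_gt0 y_int_lt1.
rewrite /zS_int pmulr_rgt0 ?invr_gt0 ?subr_gt0 // ltr_pdivlMr ?mulr_gt0 ?subr_gt0 //.
rewrite /y_p ltrBlDr -ltrBlDl ltr_pdivlMr ?mulr_gt0 //.
by rewrite mulrA [in RHS]mulrC.
Qed.

Lemma zS_int_lt1 : alpha < 1 -> 0 < bp -> y_int < 1 ->
  (zS_int < 1) = (y_int < y_u).
Proof.
move=> alpha_lt1 bp_gt0 y_int_lt1.
rewrite /zS_int -ltr_pdivlMl ?invr_gt0 ?subr_gt0 // invrK ltrBlDr mulr1 subrK.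
rewrite ltr_pdivrMr ?mulr_gt0 ?subr_gt0 // mul1r.
have yu_bp := y_u_bp (lt0r_neq0 bp_gt0).
by apply/idP/idP => lt; nra.
Qed.

Lemma y_int_zS_int_mem01 :
  0 < alpha -> alpha < 1 -> 0 < bp -> 0 < gamma -> 0 < cP -> 0 < L ->
  (0 < y_int /\ y_int < 1) /\ (0 < zS_int /\ zS_int < 1) <-> y_p < y_int /\ y_int < y_u.
Proof.
move=> alpha_gt0 alpha_lt1 bp_gt0 gamma_gt0 cP_gt0 L_gt0.
split=> [[[_ y_int_lt1] [zS_gt0 zS_lt1]] | [yp_lt y_int_lt]].
  by rewrite -zS_int_gt0 // -zS_int_lt1.
have y_int_lt1 : y_int < 1 by rewrite (lt_trans y_int_lt) ?y_u_lt1.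
by rewrite zS_int_gt0 // zS_int_lt1 // y_int_gt0.
Qed.

Local Ltac jac_entries := rewrite /sis_jac /pt3 ?mxE /=
  ?(mul0r, mulr0, mul1r, mulr1, add0r, addr0, sub0r, subr0, subrr, oppr0, opprK) //.

Lemma equilibrium_E0 : is_equilibrium F (pt3 0 0 0).
Proof. by rewrite /is_equilibrium sis_field_pt3; apply: pt3_eq0; ring. Qed.

Lemma unstable_E0 : 0 < cP -> unstable_at F (pt3 0 0 0).
Proof.
move=> cP_gt0; rewrite /unstable_at jacobian_sis_field.
by apply: (unstable_triangular3 _ _ _ (k := 1%N)) => //; jac_entries.
Qed.

Lemma equilibrium_E1 : is_equilibrium F (pt3 0 1 0).
Proof. by rewrite /is_equilibrium sis_field_pt3; apply: pt3_eq0; ring. Qed.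

Lemma stable_E1 : 0 < cP -> cIP < cIU -> bp < gamma -> stable_at F (pt3 0 1 0).
Proof.
move=> cP_gt0 cIP_lt_cIU bp_lt_gamma; rewrite /stable_at jacobian_sis_field.
by apply: stable_triangular3; jac_entries; lra.
Qed.

Lemma unstable_E1 : gamma < bp -> unstable_at F (pt3 0 1 0).
Proof.
move=> gamma_lt_bp; rewrite /unstable_at jacobian_sis_field.
by apply: (unstable_triangular3 _ _ _ (k := 0%N)) => //; jac_entries; lra.
Qed.

Lemma equilibrium_E2 : bp != 0 -> is_equilibrium F (pt3 y_u 1 0).
Proof.
move=> bp_neq0; rewrite /is_equilibrium sis_field_pt3.
by apply: pt3_eq0; rewrite -?(y_u_bp bp_neq0); ring.
Qed.

Lemma stable_E2 : alpha < 1 -> 0 < bp -> 0 < L -> cIP < cIU ->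
  gamma < bp -> y_u < y_int -> stable_at F (pt3 y_u 1 0).
Proof.
move=> alpha_lt1 bp_gt0 L_gt0 cIP_lt_cIU gamma_lt_bp.
rewrite lt_y_int // => yu_lt; rewrite /stable_at jacobian_sis_field.
have yu_bp := y_u_bp (lt0r_neq0 bp_gt0).
by apply: stable_triangular3; jac_entries; lra.
Qed.

Lemma unstable_E2 : alpha < 1 -> 0 < bp -> 0 < L -> y_int < y_u ->
  unstable_at F (pt3 y_u 1 0).
Proof.
move=> alpha_lt1 bp_gt0 L_gt0; rewrite gt_y_int // => lt_yu.
rewrite /unstable_at jacobian_sis_field.
by apply: (unstable_triangular3 _ _ _ (k := 1%N)) => //; jac_entries; lra.
Qed.

Lemma equilibrium_E3 : alpha < 1 -> 0 < bp -> 0 < L -> y_int < 1 ->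
  is_equilibrium F (pt3 y_int zS_int 0).
Proof.
move=> alpha_lt1 bp_gt0 L_gt0 y_int_lt1; rewrite /is_equilibrium sis_field_pt3.
by apply: pt3_eq0; rewrite -?(zS_int_balance, y_int_cP) //; ring.
Qed.

Lemma stable_E3 : 0 < alpha -> alpha < 1 -> 0 < bp -> 0 < gamma -> 0 < cP -> 0 < L ->
  cIP < cIU -> y_p < y_int -> y_int < y_u -> stable_at F (pt3 y_int zS_int 0).
Proof.
move=> alpha_gt0 alpha_lt1 bp_gt0 gamma_gt0 cP_gt0 L_gt0 cIP_lt_cIU yp_lt y_int_lt.
have y_int_lt1 : y_int < 1 by rewrite (lt_trans y_int_lt) ?y_u_lt1.
have y_int_gt0 : 0 < y_int by rewrite y_int_gt0.
have zS_gt0 : 0 < zS_int by rewrite zS_int_gt0.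
have zS_lt1 : zS_int < 1 by rewrite zS_int_lt1.
have balance := zS_int_balance alpha_lt1 bp_gt0 y_int_lt1.
have a_gt0 : 0 < zS_int + alpha * (1 - zS_int) by rewrite ltr_wpDr ?mulr_ge0 ?subr_ge0 ?ltW.
rewrite /stable_at jacobian_sis_field; apply: stable_block_triangular3; jac_entries.
- lra.
- rewrite y_int_cP // subrr mulr0 addr0.
  by have := mulr_gt0 (mulr_gt0 a_gt0 bp_gt0) y_int_gt0; lra.
- rewrite y_int_cP // subrr !mulr0 sub0r mulrN opprK.
  by do ![done | apply: mulr_gt0 | rewrite subr_gt0].
Qed.

Lemma equilibrium_E4 : alpha * bp != 0 -> is_equilibrium F (pt3 y_p 0 0).
Proof.
move=> abp_neq0; rewrite /is_equilibrium sis_field_pt3.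
by apply: pt3_eq0; rewrite -?(y_p_alpha_bp abp_neq0); ring.
Qed.

Lemma stable_E4 : 0 < alpha -> alpha < 1 -> 0 < bp -> 0 < L -> cIP < cIU ->
  gamma < alpha * bp -> y_int < y_p -> stable_at F (pt3 y_p 0 0).
Proof.
move=> alpha_gt0 alpha_lt1 bp_gt0 L_gt0 cIP_lt_cIU gamma_lt.
rewrite gt_y_int // => yp_gt; rewrite /stable_at jacobian_sis_field.
have yp_abp := y_p_alpha_bp (lt0r_neq0 (mulr_gt0 alpha_gt0 bp_gt0)).
by apply: stable_triangular3; jac_entries; lra.
Qed.

Lemma unstable_E4 : alpha < 1 -> 0 < bp -> 0 < L -> y_p < y_int ->
  unstable_at F (pt3 y_p 0 0).
Proof.
move=> alpha_lt1 bp_gt0 L_gt0; rewrite lt_y_int // => lt_yp.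
rewrite /unstable_at jacobian_sis_field.
by apply: (unstable_triangular3 _ _ _ (k := 1%N)) => //; jac_entries; lra.
Qed.

End SISEquilibria.

Theorem proposition1 (R : realType) (alpha bu bp gamma cP L cIU cIP : R)
  (Halpha0 : 0 < alpha) (Halpha1 : alpha < 1) (Hbeta : bp < bu) (Hbp : 0 < bp)
  (Hgamma : 0 < gamma) (HcP : 0 < cP) (HL : 0 < L)
  (HcIP : 0 <= cIP) (HcI : cIP < cIU) :
  let F := sis_field alpha bu bp gamma cP L cIU cIP in
  let yu := 1 - gamma / bp in
  let yint := cP / (L * (1 - alpha) * bp) in
  let yp := 1 - gamma / (alpha * bp) in
  let zSint := (1 - alpha)^-1 * (gamma / (bp * (1 - yint)) - alpha) in
  let E0 := pt3 0 0 0 in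
  let E1 := pt3 0 1 0 in
  let E2 := pt3 yu 1 0 in
  let E3 := pt3 yint zSint 0 in
  let E4 := pt3 yp 0 0 in
  (* (1) *)
  (is_equilibrium F E0 /\ unstable_at F E0) /\
  (* (2) *)
  (is_equilibrium F E1 /\
   (bp < gamma -> stable_at F E1) /\ (gamma < bp -> unstable_at F E1)) /\
  (* (3) *)
  (is_equilibrium F E2 /\
   ((0 < yu /\ yu <= 1) <-> gamma < bp) /\
   (gamma < bp -> (yu < yint -> stable_at F E2) /\ (yint < yu -> unstable_at F E2))) /\
  (* (4) *)
  (((0 < yint /\ yint < 1) /\ (0 < zSint /\ zSint < 1) <-> yp < yint /\ yint < yu) /\
   (yp < yint /\ yint < yu -> is_equilibrium F E3 /\ stable_at F E3)) /\
  (* (5) *)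
  (is_equilibrium F E4 /\
   ((0 < yp /\ yp < 1) <-> gamma < alpha * bp) /\
   (gamma < alpha * bp -> (yint < yp -> stable_at F E4) /\ (yp < yint -> unstable_at F E4))).
Proof.
move=> F yu yint yp zSint E0 E1 E2 E3 E4.
have abp_gt0 : 0 < alpha * bp by rewrite mulr_gt0.
split; first by split; [exact: equilibrium_E0 | exact: unstable_E0].
split.
  split; first exact: equilibrium_E1.
  by split=> ?; [exact: stable_E1 | exact: unstable_E1].
split.
  split; first exact/equilibrium_E2/lt0r_neq0.
  split; first exact: y_u_mem01.
  by move=> gamma_lt_bp; split=> ?; [exact: stable_E2 | exact: unstable_E2].
split.
  split; first exact: y_int_zS_int_mem01.
  move=> [yp_lt yint_lt]; have yint_lt1 : yint < 1 by rewrite (lt_trans yint_lt) ?y_u_lt1.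
  by split; [exact: equilibrium_E3 | exact: stable_E3].
split; first exact/equilibrium_E4/lt0r_neq0.
split; first exact: y_p_mem01.
by move=> gamma_lt; split=> ?; [exact: stable_E4 | exact: unstable_E4].
Qed.
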